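(* Let $q>0$ and let $u\in C^{4}(\mathbb{R}^{2})$, $u>0$, solve $\Delta^{2}u+u^{-q}=0$ in $\mathbb{R}^{2}$. Then for all $r>0$: $\bar u'(r)>0$, $\bar u''(r)>0$, $\bar u'''(r)<0$, and $\bar w'(r)<0$.
   Context: $w:=\Delta u$. For a function $f$ on $\mathbb{R}^{2}$, $\bar f(r)$ denotes its spherical average over $\partial B_{r}(0)$ ($\bar f(0)=f(0)$); derivatives are with respect to $r$. *)

From Stdlib Require Import Reals List.
From Coquelicot Require Import Coquelicot.
Open Scope R_scope.

Definition Dx (f : R -> R -> R) : R -> R -> R :=
  fun x y => Derive (fun t => f t y) x.
Definition Dy (f : R -> R -> R) : R -> R -> R :=
  fun x y => Derive (fun t => f x t) y.

(* Iterated partial derivative along a list of directions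
   (true = d/dx, false = d/dy); the head is applied last. *)
Fixpoint pd (l : list bool) (f : R -> R -> R) : R -> R -> R :=
  match l with
  | nil => f
  | b :: l' => (if b then Dx else Dy) (pd l' f)
  end.

Definition Ck (k : nat) (f : R -> R -> R) : Prop :=
  (forall l : list bool, (length l < k)%nat -> forall x y : R,
      ex_derive (fun t => pd l f t y) x /\ ex_derive (fun t => pd l f x t) y) /\
  (forall l : list bool, (length l <= k)%nat -> forall p : R * R,
      continuous (fun q : R * R => pd l f (fst q) (snd q)) p).

Definition Lap (f : R -> R -> R) : R -> R -> R :=
  fun x y => Dx (Dx f) x y + Dy (Dy f) x y.

(* Spherical (circular) average of f over the circle of radius r centered
   at 0; for r = 0 this is f 0 0. *)
Definition sph_avg (f : R -> R -> R) (r : R) : R :=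
  RInt (fun th => f (r * cos th) (r * sin th)) 0 (2 * PI) / (2 * PI).

From Pilot Require Import Defs.
From Stdlib Require Import Reals Lra Lia List FunctionalExtensionality.
From Coquelicot Require Import Coquelicot.
(* Re-imported so that Dx denotes the partial derivative of Defs, not the
   homonymous domain-restriction predicate of the Reals library. *)
Import Pilot.Defs.
Open Scope R_scope.

(* Write F, W, G for the spherical averages of u, Lap u and Lap (Lap u).
   Differentiating under the integral sign in polar coordinates gives
   F' and F'' as circle means of the radial derivatives of u, and the polar
   form of the Laplacian, whose angular part integrates to zero by
   periodicity, gives the radial equations
       (r F')' = r W,   (r W')' = r G,   F'(0) = 0.
   The equation and u > 0 give G < 0 and F > 0.  An elementary comparison
   argument on this one-dimensional system then yields, for r > 0,
       W' < 0,  F''' < 0 (via N = r^3 W'/2 - r^2 W + 2 r F', N' = r^3 G / 2),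
       F'' > 0 (otherwise F would be eventually concave and become negative)
   and F' > 0. *)

Definition continuous2 (h : R -> R -> R) : Prop :=
  forall p : R * R, continuous (fun q : R * R => h (fst q) (snd q)) p.

Lemma continuous2_comp (h f g : R -> R -> R) :
  continuous2 h -> continuous2 f -> continuous2 g ->
  continuous2 (fun r t => h (f r t) (g r t)).
Proof.
  intros Hh Hf Hg p.
  apply (continuous_comp_2 (fun q : R * R => f (fst q) (snd q))
                           (fun q : R * R => g (fst q) (snd q)) h);
    [apply Hf | apply Hg | apply Hh].
Qed.

Lemma continuous2_fst : continuous2 (fun r t => r).
Proof. intros p; apply continuous_fst. Qed.

Lemma continuous2_snd : continuous2 (fun r t => t).
Proof. intros p; apply continuous_snd. Qed.

Lemma continuous2_const (c : R) : continuous2 (fun r t => c).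
Proof. intros p; apply continuous_const. Qed.

Lemma continuous2_plus (f g : R -> R -> R) :
  continuous2 f -> continuous2 g -> continuous2 (fun r t => f r t + g r t).
Proof.
  intros Hf Hg; apply (continuous2_comp Rplus); auto.
  intros p; apply (continuous_plus (fun q : R * R => fst q) (fun q : R * R => snd q));
    [apply continuous_fst | apply continuous_snd].
Qed.

Lemma continuous2_mult (f g : R -> R -> R) :
  continuous2 f -> continuous2 g -> continuous2 (fun r t => f r t * g r t).
Proof.
  intros Hf Hg; apply (continuous2_comp Rmult); auto.
  intros p; apply (continuous_mult (fun q : R * R => fst q) (fun q : R * R => snd q));
    [apply continuous_fst | apply continuous_snd].
Qed.

Lemma continuous2_fun1 (h : R -> R) (f : R -> R -> R) :
  (forall x, continuous h x) -> continuous2 f -> continuous2 (fun r t => h (f r t)).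
Proof.
  intros Hh Hf p; apply (continuous_comp (fun q : R * R => f (fst q) (snd q)) h);
    [apply Hf | apply Hh].
Qed.

Lemma continuous2_opp (f : R -> R -> R) :
  continuous2 f -> continuous2 (fun r t => - f r t).
Proof.
  apply (continuous2_fun1 Ropp); intros x.
  apply continuity_pt_filterlim, continuity_pt_opp, continuity_pt_id.
Qed.

Lemma continuous2_cos : continuous2 (fun r t => cos t).
Proof.
  apply (continuous2_fun1 cos (fun r t => t)); [apply continuous_cos | apply continuous2_snd].
Qed.

Lemma continuous2_sin : continuous2 (fun r t => sin t).
Proof.
  apply (continuous2_fun1 sin (fun r t => t)); [apply continuous_sin | apply continuous2_snd].
Qed.

Lemma continuous2_slice (h : R -> R -> R) (r t : R) :
  continuous2 h -> continuous (fun t => h r t) t.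
Proof.
  intros Hh; apply (continuous_comp_2 (fun _ => r) (fun t => t) h);
    [apply continuous_const | apply continuous_id | apply Hh].
Qed.

(* Derivative rules specialised to real functions, so that unification stays in R. *)
Lemma is_derive_value (f : R -> R) (x l l' : R) :
  is_derive f x l -> l = l' -> is_derive f x l'.
Proof. intros H <-; exact H. Qed.

Lemma is_derive_Rid (x : R) : is_derive (fun t => t) x 1.
Proof. auto_derive; auto. Qed.

Lemma is_derive_Rplus (f g : R -> R) (x df dg : R) :
  is_derive f x df -> is_derive g x dg -> is_derive (fun t => f t + g t) x (df + dg).
Proof. intros Hf Hg; exact (is_derive_plus f g x df dg Hf Hg). Qed.

Lemma is_derive_Rminus (f g : R -> R) (x df dg : R) :
  is_derive f x df -> is_derive g x dg -> is_derive (fun t => f t - g t) x (df - dg).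
Proof. intros Hf Hg; exact (is_derive_minus f g x df dg Hf Hg). Qed.

Lemma is_derive_Rmult (f g : R -> R) (x df dg : R) :
  is_derive f x df -> is_derive g x dg ->
  is_derive (fun t => f t * g t) x (df * g x + f x * dg).
Proof. intros Hf Hg; exact (is_derive_mult f g x df dg Hf Hg Rmult_comm). Qed.

Lemma is_derive_mult_const (f : R -> R) (x df c : R) :
  is_derive f x df -> is_derive (fun t => f t * c) x (df * c).
Proof.
  intros Hf; apply (is_derive_ext (fun t => c * f t)); [intros; apply Rmult_comm |].
  rewrite (Rmult_comm df); exact (is_derive_scal f x c df Hf).
Qed.

Definition partials_exist (v : R -> R -> R) : Prop :=
  forall a b, ex_derive (fun t => v t b) a /\ ex_derive (fun t => v a t) b.

(* Chain rule along a curve: a function with partial derivatives everywhere and a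
   jointly continuous x-derivative is differentiable, so it composes with the
   differentiable curve z |-> (a z, b z). *)
Lemma chain_rule2 (v : R -> R -> R) (a b : R -> R) (z da db : R) :
  partials_exist v -> continuous2 (Dx v) ->
  is_derive a z da -> is_derive b z db ->
  is_derive (fun z => v (a z) (b z)) z
    (Dx v (a z) (b z) * da + Dy v (a z) (b z) * db).
Proof.
  intros Hv Hc Ha Hb; apply is_derive_Reals.
  apply derivable_pt_lim_comp_2d; try apply is_derive_Reals; auto.
  apply filterdiff_differentiable_pt_lim.
  eapply filterdiff_ext_lin.
  - apply (is_derive_filterdiff v (a z) (b z) (Dx v) (Dy v (a z) (b z))).
    + apply filter_forall; intros [x y]; apply Derive_correct, (proj1 (Hv x y)).
    + apply Derive_correct, (proj2 (Hv (a z) (b z))).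
    + apply (Hc (a z, b z)).
  - intros [x y]; simpl; unfold plus, scal; simpl; unfold mult; simpl; ring.
Qed.

Definition polar (h : R -> R -> R) (r t : R) : R := h (r * cos t) (r * sin t).

Lemma continuous2_polar (h : R -> R -> R) : continuous2 h -> continuous2 (polar h).
Proof.
  intros Hh; unfold polar; apply continuous2_comp; auto;
    apply continuous2_mult; auto using continuous2_fst, continuous2_cos, continuous2_sin.
Qed.

Ltac solve_continuous2 :=
  repeat match goal with
  | |- continuous2 (fun r t => _ + _) => apply continuous2_plus
  | |- continuous2 (fun r t => _ - _) => apply continuous2_plus
  | |- continuous2 (fun r t => _ * _) => apply continuous2_mult
  | |- continuous2 (fun r t => - _) => apply continuous2_opp
  | |- continuous2 (fun r t => cos t) => apply continuous2_cos
  | |- continuous2 (fun r t => sin t) => apply continuous2_sin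
  | |- continuous2 (fun r t => r) => apply continuous2_fst
  | |- continuous2 (fun r t => polar _ r t) => apply continuous2_polar
  | |- continuous2 (polar _) => apply continuous2_polar
  | |- continuous2 (fun r t => _) => apply continuous2_const
  end.

Definition circ_mean (g : R -> R -> R) (r : R) : R := RInt (g r) 0 (2 * PI) / (2 * PI).

Lemma sph_avg_circ_mean (h : R -> R -> R) : sph_avg h = circ_mean (polar h).
Proof. reflexivity. Qed.

Lemma ex_RInt_circle (g : R -> R -> R) (r : R) :
  continuous2 g -> ex_RInt (g r) 0 (2 * PI).
Proof.
  intros Hg; apply (@ex_RInt_continuous R_CompleteNormedModule).
  intros t _; apply continuous2_slice, Hg.
Qed.

Lemma circ_mean_derive (g dg : R -> R -> R) (r : R) :
  continuous2 g -> continuous2 dg ->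
  (forall r t, is_derive (fun z => g z t) r (dg r t)) ->
  is_derive (circ_mean g) r (circ_mean dg r).
Proof.
  intros Hg Hdg Hd.
  assert (Hdg_eq : forall r t, Derive (fun z => g z t) r = dg r t)
    by (intros; apply is_derive_unique, Hd).
  unfold circ_mean, Rdiv.
  apply (is_derive_ext (fun z => / (2 * PI) * RInt (g z) 0 (2 * PI)));
    [intros; apply Rmult_comm |].
  replace (RInt (dg r) 0 (2 * PI) * / (2 * PI)) with (/ (2 * PI) * RInt (dg r) 0 (2 * PI))
    by apply Rmult_comm.
  apply (is_derive_scal (fun z => RInt (g z) 0 (2 * PI))).
  replace (RInt (dg r) 0 (2 * PI)) with (RInt (fun t => Derive (fun z => g z t) r) 0 (2 * PI))
    by (apply RInt_ext; intros; apply Hdg_eq).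
  apply (is_derive_RInt_param g).
  - apply filter_forall; intros; eexists; apply Hd.
  - intros t _; apply continuity_2d_pt_filterlim.
    apply (continuous_ext (fun p : R * R => dg (fst p) (snd p)));
      [intros; symmetry; apply Hdg_eq | apply Hdg].
  - apply filter_forall; intros; apply ex_RInt_circle, Hg.
Qed.

Record C2 (v : R -> R -> R) : Prop := {
  c2_partials : partials_exist v;
  c2_partials_x : partials_exist (Dx v);
  c2_partials_y : partials_exist (Dy v);
  c2_cont : continuous2 v;
  c2_cont_x : continuous2 (Dx v);
  c2_cont_y : continuous2 (Dy v);
  c2_cont_xx : continuous2 (Dx (Dx v));
  c2_cont_xy : continuous2 (Dy (Dx v));
  c2_cont_yx : continuous2 (Dx (Dy v));
  c2_cont_yy : continuous2 (Dy (Dy v)) }.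

(* First and second radial derivatives, and the angular derivative divided by r,
   of v in polar coordinates. *)
Definition radial1 (v : R -> R -> R) (r t : R) : R :=
  polar (Dx v) r t * cos t + polar (Dy v) r t * sin t.
Definition radial2 (v : R -> R -> R) (r t : R) : R :=
  radial1 (Dx v) r t * cos t + radial1 (Dy v) r t * sin t.
Definition angular1 (v : R -> R -> R) (r t : R) : R :=
  polar (Dy v) r t * cos t - polar (Dx v) r t * sin t.

Lemma polar_radial_derive (v : R -> R -> R) (r t : R) :
  partials_exist v -> continuous2 (Dx v) ->
  is_derive (fun z => polar v z t) r (radial1 v r t).
Proof.
  intros Hv Hc; unfold radial1, polar.
  apply (chain_rule2 v (fun z => z * cos t) (fun z => z * sin t)); auto;
    auto_derive; auto; ring.
Qed.

Lemma polar_angular_derive (v : R -> R -> R) (r t : R) :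
  partials_exist v -> continuous2 (Dx v) ->
  is_derive (polar v r) t (r * angular1 v r t).
Proof.
  intros Hv Hc; unfold angular1, polar.
  replace (r * _) with (Dx v (r * cos t) (r * sin t) * (- (r * sin t))
                        + Dy v (r * cos t) (r * sin t) * (r * cos t)) by ring.
  apply (chain_rule2 v (fun z => r * cos z) (fun z => r * sin z)); auto;
    auto_derive; auto; ring.
Qed.

Section RadialCalculus.

Variable v : R -> R -> R.
Hypothesis Hv : C2 v.

Lemma continuous2_radial1 : continuous2 (radial1 v).
Proof. unfold radial1; solve_continuous2; apply Hv. Qed.

Lemma continuous2_radial2 : continuous2 (radial2 v).
Proof. unfold radial2, radial1; solve_continuous2; apply Hv. Qed.

Lemma radial1_derive (r t : R) : is_derive (fun z => radial1 v z t) r (radial2 v r t).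
Proof.
  unfold radial2; unfold radial1 at 1.
  apply is_derive_Rplus; apply is_derive_mult_const;
    apply polar_radial_derive; apply Hv.
Qed.

(* The angular derivative measures the defect in the polar form
   r v_rr + v_r = r Lap v of the Laplacian. *)
Lemma angular1_derive (r t : R) :
  is_derive (angular1 v r) t
    (r * polar (Lap v) r t - r * radial2 v r t - radial1 v r t).
Proof.
  eapply is_derive_value.
  - apply is_derive_Rminus; apply is_derive_Rmult.
    + exact (polar_angular_derive (Dy v) r t (c2_partials_y v Hv) (c2_cont_yx v Hv)).
    + exact (is_derive_cos t).
    + exact (polar_angular_derive (Dx v) r t (c2_partials_x v Hv) (c2_cont_xx v Hv)).
    + exact (is_derive_sin t).
  - rewrite <- (Rmult_1_r (r * polar (Lap v) r t)), <- (sin2_cos2 t).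
    unfold angular1, radial2, radial1, Lap, polar, Rsqr; ring.
Qed.

Lemma continuous2_Lap : continuous2 (Lap v).
Proof. unfold Lap; apply continuous2_plus; apply Hv. Qed.

Lemma sph_avg_derive (r : R) : is_derive (sph_avg v) r (circ_mean (radial1 v) r).
Proof.
  rewrite sph_avg_circ_mean; apply circ_mean_derive.
  - apply continuous2_polar, Hv.
  - apply continuous2_radial1.
  - intros; apply polar_radial_derive; apply Hv.
Qed.

Lemma mean_radial1_derive (r : R) :
  is_derive (circ_mean (radial1 v)) r (circ_mean (radial2 v) r).
Proof.
  apply circ_mean_derive;
    [apply continuous2_radial1 | apply continuous2_radial2 | intros; apply radial1_derive].
Qed.

(* Polar form of the Laplacian, averaged over circles: the angular term
   integrates to zero by periodicity, leaving r F'' + F' = r (mean of Lap v). *)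
Lemma radial_laplacian (r : R) :
  r * circ_mean (radial2 v) r + circ_mean (radial1 v) r = r * sph_avg (Lap v) r.
Proof.
  set (defect := fun t => r * polar (Lap v) r t - r * radial2 v r t - radial1 v r t).
  assert (Hdefect : is_RInt defect 0 (2 * PI) 0).
  { assert (Hper : angular1 v r (2 * PI) = angular1 v r 0)
      by (unfold angular1, polar; rewrite cos_2PI, sin_2PI, cos_0, sin_0; reflexivity).
    assert (Hftc := is_RInt_derive (angular1 v r) defect 0 (2 * PI)).
    rewrite Hper, minus_eq_zero in Hftc; apply Hftc.
    - intros t _; apply angular1_derive.
    - intros t _; apply (continuous2_slice
        (fun r t => r * polar (Lap v) r t - r * radial2 v r t - radial1 v r t)).
      solve_continuous2; auto using continuous2_Lap, continuous2_radial1, continuous2_radial2. }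
  assert (Hlin : is_RInt defect 0 (2 * PI)
    (r * RInt (polar (Lap v) r) 0 (2 * PI) - r * RInt (radial2 v r) 0 (2 * PI)
       - RInt (radial1 v r) 0 (2 * PI))).
  { apply (is_RInt_minus (V := R_NormedModule)
             (fun t => r * polar (Lap v) r t - r * radial2 v r t) (radial1 v r));
      [apply (is_RInt_minus (V := R_NormedModule)
                (fun t => r * polar (Lap v) r t) (fun t => r * radial2 v r t));
       apply (is_RInt_scal (V := R_NormedModule)) |];
      apply (RInt_correct (V := R_CompleteNormedModule)), ex_RInt_circle;
      auto using continuous2_polar, continuous2_Lap, continuous2_radial1, continuous2_radial2. }
  assert (Hzero := is_RInt_unique _ _ _ _ Hlin).
  rewrite (is_RInt_unique _ _ _ _ Hdefect) in Hzero.
  rewrite sph_avg_circ_mean; unfold circ_mean.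
  assert (HPI := PI_RGT_0); field_simplify; [f_equal; lra | lra | lra].
Qed.

End RadialCalculus.

(* At the origin the radial derivative is a trigonometric polynomial of degree one,
   whose mean vanishes: F'(0) = 0. *)
Lemma mean_radial1_origin (v : R -> R -> R) : circ_mean (radial1 v) 0 = 0.
Proof.
  set (a := Dx v 0 0); set (b := Dy v 0 0).
  assert (Hlin : forall t, radial1 v 0 t = a * cos t + b * sin t)
    by (intros t; unfold radial1, polar; rewrite !Rmult_0_l; reflexivity).
  assert (Hftc : is_RInt (fun t => a * cos t + b * sin t) 0 (2 * PI)
                  (minus (a * sin (2 * PI) - b * cos (2 * PI)) (a * sin 0 - b * cos 0))).
  { apply (is_RInt_derive (fun t => a * sin t - b * cos t)).
    - intros t _; auto_derive; auto; ring.
    - intros t _; apply (continuous2_slice (fun r t => a * cos t + b * sin t) 0).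
      solve_continuous2. }
  rewrite sin_2PI, cos_2PI, sin_0, cos_0, minus_eq_zero in Hftc.
  unfold circ_mean.
  rewrite (RInt_ext _ (fun t => a * cos t + b * sin t)) by (intros; apply Hlin).
  rewrite (is_RInt_unique _ _ _ _ Hftc); unfold zero; simpl; lra.
Qed.

Lemma sph_avg_pos (f : R -> R -> R) (r : R) :
  continuous2 f -> (forall x y, 0 < f x y) -> 0 < sph_avg f r.
Proof.
  intros Hc Hpos; assert (HPI := PI_RGT_0).
  unfold sph_avg, Rdiv; apply Rmult_lt_0_compat; [| apply Rinv_0_lt_compat; lra].
  apply RInt_gt_0; [lra | intros; apply Hpos |].
  intros t _; apply (continuous2_slice (polar f)), continuous2_polar, Hc.
Qed.

Lemma sph_avg_neg (f : R -> R -> R) (r : R) :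
  continuous2 f -> (forall x y, f x y < 0) -> sph_avg f r < 0.
Proof.
  intros Hc Hneg.
  assert (Hpos := sph_avg_pos (fun x y => - f x y) r (continuous2_opp f Hc)
                    (fun x y => Ropp_0_gt_lt_contravar _ (Hneg x y))).
  unfold sph_avg in *; rewrite (RInt_opp (V := R_CompleteNormedModule)) in Hpos.
  - unfold opp in Hpos; simpl in Hpos; unfold Rdiv in *; lra.
  - apply (ex_RInt_circle (polar f)), continuous2_polar, Hc.
Qed.

Lemma pd_app (l m : list bool) (f : R -> R -> R) : pd (l ++ m) f = pd l (pd m f).
Proof. induction l as [| b l IH]; simpl; [reflexivity | rewrite IH; reflexivity]. Qed.

Lemma Ck_le (k m : nat) (f : R -> R -> R) : (m <= k)%nat -> Ck k f -> Ck m f.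
Proof. intros Hmk [Hex Hc]; split; intros l Hl; [apply Hex | apply Hc]; lia. Qed.

Lemma Ck_pd (k : nat) (m : list bool) (f : R -> R -> R) :
  Ck (k + length m) f -> Ck k (pd m f).
Proof.
  intros [Hex Hc]; split; intros l Hl; rewrite <- pd_app;
    [apply Hex | apply Hc]; rewrite length_app; lia.
Qed.

Lemma Ck_continuous (k : nat) (f : R -> R -> R) : Ck k f -> continuous2 f.
Proof. intros [_ Hc] p; apply (Hc nil); simpl; lia. Qed.

Lemma pd_plus (k : nat) (f g : R -> R -> R) (l : list bool) :
  Ck k f -> Ck k g -> (length l <= k)%nat ->
  pd l (fun x y => f x y + g x y) = (fun x y => pd l f x y + pd l g x y).
Proof.
  intros [Hf _] [Hg _]; induction l as [| b l IH]; simpl; intros Hl; [reflexivity |].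
  assert (Hlt : (length l < k)%nat) by lia.
  rewrite IH by lia.
  apply functional_extensionality; intros x; apply functional_extensionality; intros y.
  destruct b; apply Derive_plus.
  - exact (proj1 (Hf l Hlt x y)).
  - exact (proj1 (Hg l Hlt x y)).
  - exact (proj2 (Hf l Hlt x y)).
  - exact (proj2 (Hg l Hlt x y)).
Qed.

Lemma Ck_plus (k : nat) (f g : R -> R -> R) :
  Ck k f -> Ck k g -> Ck k (fun x y => f x y + g x y).
Proof.
  intros Hf Hg; split; intros l Hl; rewrite (pd_plus k f g l Hf Hg) by lia.
  - intros x y; split.
    + exact (ex_derive_plus (fun t => pd l f t y) (fun t => pd l g t y) x
               (proj1 (proj1 Hf l Hl x y)) (proj1 (proj1 Hg l Hl x y))).
    + exact (ex_derive_plus (fun t => pd l f x t) (fun t => pd l g x t) y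
               (proj2 (proj1 Hf l Hl x y)) (proj2 (proj1 Hg l Hl x y))).
  - apply continuous2_plus; intros p; [apply (proj2 Hf) | apply (proj2 Hg)]; lia.
Qed.

Lemma Ck_Lap (k : nat) (f : R -> R -> R) : Ck (k + 2) f -> Ck k (Lap f).
Proof.
  intros Hf; apply (Ck_plus k (pd (true :: true :: nil) f) (pd (false :: false :: nil) f));
    apply Ck_pd; exact Hf.
Qed.

Lemma Ck2_C2 (f : R -> R -> R) : Ck 2 f -> C2 f.
Proof.
  intros [Hex Hc]; split;
    [ exact (Hex nil ltac:(simpl; lia))
    | exact (Hex (true :: nil) ltac:(simpl; lia))
    | exact (Hex (false :: nil) ltac:(simpl; lia))
    | exact (Hc nil ltac:(simpl; lia))
    | exact (Hc (true :: nil) ltac:(simpl; lia))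
    | exact (Hc (false :: nil) ltac:(simpl; lia))
    | exact (Hc (true :: true :: nil) ltac:(simpl; lia))
    | exact (Hc (false :: true :: nil) ltac:(simpl; lia))
    | exact (Hc (true :: false :: nil) ltac:(simpl; lia))
    | exact (Hc (false :: false :: nil) ltac:(simpl; lia)) ].
Qed.

Lemma mean_value (f df : R -> R) (a b : R) :
  a < b -> (forall c, a <= c <= b -> is_derive f c (df c)) ->
  exists c, f b - f a = df c * (b - a) /\ a < c < b.
Proof. intros Hab Hd; apply MVT_cor2; auto; intros c Hc; apply is_derive_Reals, Hd, Hc. Qed.

Lemma Derive_n_of_is_derive (f f1 f2 : R -> R) (r d3 : R) :
  (forall s, is_derive f s (f1 s)) -> (forall s, is_derive f1 s (f2 s)) ->
  is_derive f2 r d3 ->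
  Derive f r = f1 r /\ Derive_n f 2 r = f2 r /\ Derive_n f 3 r = d3.
Proof.
  intros Hf Hf1 Hf2.
  assert (D1 : forall s, Derive f s = f1 s) by (intros; apply is_derive_unique, Hf).
  assert (D2 : forall s, Derive_n f 2 s = f2 s).
  { intros s; change (Derive (Derive f) s = f2 s); rewrite (Derive_ext _ f1 s D1).
    apply is_derive_unique, Hf1. }
  split; [apply D1 | split; [apply D2 |]].
  change (Derive (Derive_n f 2) r = d3); rewrite (Derive_ext _ f2 r D2).
  apply is_derive_unique, Hf2.
Qed.

Lemma nonincreasing_right (f df : R -> R) (a : R) :
  (forall c, is_derive f c (df c)) -> (forall c, a < c -> df c <= 0) ->
  forall s, a < s -> f s <= f a.
Proof.
  intros Hd Hneg s Has; destruct (mean_value f df a s Has (fun c _ => Hd c)) as (c & Hc & Hac).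
  assert (df c * (s - a) <= 0) by (apply Rmult_le_0_r; [apply Hneg | ]; lra).
  lra.
Qed.

Lemma quadratic_eventually_negative (A B c : R) :
  0 < c -> exists t, 0 < t /\ B + A * t - c * t ^ 2 / 2 < 0.
Proof.
  intros Hc; set (M := Rabs A + Rabs B + 1).
  assert (HA := Rle_abs A); assert (HB := Rle_abs B).
  assert (HA0 := Rabs_pos A); assert (HB0 := Rabs_pos B).
  assert (HMc : 0 < 2 * M / c) by (apply Rdiv_lt_0_compat; unfold M; lra).
  exists (1 + 2 * M / c); split; [lra |].
  set (t := 1 + 2 * M / c).
  assert (Hsq : c * t ^ 2 / 2 = t * (c / 2 + M)) by (unfold t; field; lra).
  assert (Ht : 1 <= t) by (unfold t; lra).
  assert (A * t <= Rabs A * t) by (apply Rmult_le_compat_r; lra).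
  assert (Rabs B <= Rabs B * t) by nra.
  rewrite Hsq; unfold M in *; nra.
Qed.

Lemma concave_eventually_negative (f f1 f2 : R -> R) (a c : R) :
  0 < c -> (forall s, is_derive f s (f1 s)) -> (forall s, is_derive f1 s (f2 s)) ->
  (forall s, a < s -> f2 s <= - c) -> exists s, f s < 0.
Proof.
  intros Hc Hf Hf1 Hf2.
  assert (Hslope : forall s, a < s -> f1 s + c * s <= f1 a + c * a).
  { apply (nonincreasing_right (fun s => f1 s + c * s) (fun s => f2 s + c) a);
      [| intros s Hs; specialize (Hf2 s Hs); lra].
    intros s; apply is_derive_Rplus; [apply Hf1 |].
    auto_derive; auto; ring. }
  assert (Htaylor : forall s, a < s ->
            f s - f1 a * s + c * ((s - a) ^ 2 / 2) <= f a - f1 a * a + c * ((a - a) ^ 2 / 2)).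
  { apply (nonincreasing_right (fun s => f s - f1 a * s + c * ((s - a) ^ 2 / 2))
             (fun s => f1 s - f1 a + c * (s - a)) a);
      [| intros s Hs; specialize (Hslope s Hs); lra].
    intros s; apply is_derive_Rplus; [apply is_derive_Rminus; [apply Hf |] |].
    - auto_derive; auto; ring.
    - auto_derive; auto; field. }
  destruct (quadratic_eventually_negative (f1 a) (f a) c Hc) as (t & Ht & Hneg).
  exists (a + t); specialize (Htaylor (a + t) ltac:(lra)).
  replace (a + t - a) with t in Htaylor by ring; nra.
Qed.

Section RadialComparison.

Variables F F1 F2 W W1 W2 G : R -> R.
Hypothesis F_deriv : forall r, is_derive F r (F1 r).
Hypothesis F1_deriv : forall r, is_derive F1 r (F2 r).
Hypothesis W_deriv : forall r, is_derive W r (W1 r).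
Hypothesis W1_deriv : forall r, is_derive W1 r (W2 r).
Hypothesis F_radial : forall r, r * F2 r + F1 r = r * W r.
Hypothesis W_radial : forall r, r * W2 r + W1 r = r * G r.
Hypothesis G_neg : forall r, G r < 0.
Hypothesis F_pos : forall r, 0 < F r.
Hypothesis F1_origin : F1 0 = 0.

(* r W'(r) = int_0^r s G(s) ds < 0. *)
Lemma W1_neg (r : R) : 0 < r -> W1 r < 0.
Proof.
  intros Hr.
  destruct (mean_value (fun s => s * W1 s) (fun s => s * G s) 0 r Hr) as (c & Hc & Hcr).
  { intros s _; eapply is_derive_value;
      [apply is_derive_Rmult; [apply is_derive_Rid | apply W1_deriv] |].
    rewrite <- W_radial; simpl; ring. }
  assert (c * G c < 0) by (apply Rmult_pos_neg; [lra | apply G_neg]).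
  nra.
Qed.

(* The third derivative of F, computed from F'' = W - F'/r. *)
Definition F3 (r : R) : R := W1 r - W r / r + 2 * F1 r / r ^ 2.

Lemma F2_derive (r : R) : 0 < r -> is_derive F2 r (F3 r).
Proof.
  intros Hr.
  assert (HF2 : forall s, s <> 0 -> F2 s = W s - F1 s / s).
  { intros s Hs; apply (Rmult_eq_reg_l s); [| exact Hs].
    replace (s * (W s - F1 s / s)) with (s * W s - F1 s) by (field; exact Hs).
    specialize (F_radial s); lra. }
  apply (is_derive_ext_loc (fun s => W s - F1 s / s)).
  { apply (locally_interval _ r 0 p_infty); simpl; auto.
    intros s Hs _; symmetry; apply HF2; simpl in Hs; lra. }
  assert (Hinv : is_derive (fun s => / s) r (- / r ^ 2))
    by (auto_derive; [lra | field; lra]).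
  eapply is_derive_value.
  - apply is_derive_Rminus; [apply W_deriv |].
    apply (is_derive_Rmult F1 (fun s => / s)); [apply F1_deriv | exact Hinv].
  - unfold F3; rewrite (HF2 r) by lra; field; lra.
Qed.

(* N(s) = s^3/2 W'(s) - s^2 W(s) + 2 s F'(s) satisfies N' = s^3 G / 2 and N(0) = 0,
   and r^3 F'''(r) = N(r) + r^3 W'(r) / 2. *)
Lemma F3_neg (r : R) : 0 < r -> F3 r < 0.
Proof.
  intros Hr.
  set (N := fun s => s ^ 3 / 2 * W1 s - s ^ 2 * W s + 2 * s * F1 s).
  destruct (mean_value N (fun s => s ^ 3 / 2 * G s) 0 r Hr) as (c & Hc & Hcr).
  { intros s _; unfold N; eapply is_derive_value.
    - apply is_derive_Rplus; [apply is_derive_Rminus |]; apply is_derive_Rmult;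
        [ auto_derive; auto | apply W1_deriv | auto_derive; auto | apply W_deriv
        | auto_derive; auto | apply F1_deriv ].
    - assert (HW := W_radial s); assert (HF := F_radial s).
      replace (s ^ 3 / 2 * G s) with (s ^ 2 / 2 * (s * G s)) by field.
      rewrite <- HW; simpl; lra. }
  assert (Hc3 : 0 < c ^ 3) by (apply pow_lt; lra).
  assert (HcG : c ^ 3 / 2 * G c < 0) by (specialize (G_neg c); nra).
  assert (HN0 : N 0 = 0) by (unfold N; simpl; field).
  assert (HNr : N r < 0).
  { assert (c ^ 3 / 2 * G c * (r - 0) < 0) by (apply Rmult_neg_pos; lra).
    rewrite HN0 in Hc; lra. }
  assert (Hr3 : 0 < r ^ 3) by (apply pow_lt; lra).
  assert (HW1 := W1_neg r Hr).
  assert (Hid : r ^ 3 * F3 r = N r + r ^ 3 / 2 * W1 r) by (unfold F3, N; field; lra).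
  nra.
Qed.

Lemma F2_decreasing (a b : R) : 0 < a -> a < b -> F2 b < F2 a.
Proof.
  intros Ha Hab.
  destruct (mean_value F2 F3 a b Hab) as (c & Hc & Hac).
  { intros c Hc; apply F2_derive; lra. }
  assert (F3 c < 0) by (apply F3_neg; lra).
  nra.
Qed.

(* F is convex: otherwise F'' < 0 from some point on, and F > 0 could not last. *)
Lemma F2_pos (r : R) : 0 < r -> 0 < F2 r.
Proof.
  intros Hr; destruct (Rlt_le_dec 0 (F2 r)) as [Hpos | Hnonpos]; [exact Hpos | exfalso].
  assert (Hdrop : F2 (r + 1) < F2 r) by (apply F2_decreasing; lra).
  destruct (concave_eventually_negative F F1 F2 (r + 1) (- F2 (r + 1))) as (s & Hs);
    auto; [lra | | specialize (F_pos s); lra].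
  intros s Hs; assert (F2 s < F2 (r + 1)) by (apply F2_decreasing; lra); lra.
Qed.

(* F' increases from F'(0) = 0. *)
Lemma F1_pos (r : R) : 0 < r -> 0 < F1 r.
Proof.
  intros Hr; destruct (mean_value F1 F2 0 r Hr) as (c & Hc & Hcr).
  { intros c _; apply F1_deriv. }
  assert (0 < F2 c) by (apply F2_pos; lra).
  rewrite F1_origin in Hc; nra.
Qed.

Theorem radial_derivative_signs (r : R) : 0 < r ->
  0 < Derive F r /\ 0 < Derive_n F 2 r /\ Derive_n F 3 r < 0 /\ Derive W r < 0.
Proof.
  intros Hr.
  destruct (Derive_n_of_is_derive F F1 F2 r (F3 r) F_deriv F1_deriv (F2_derive r Hr))
    as (-> & -> & ->).
  rewrite (is_derive_unique W r (W1 r) (W_deriv r)).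
  auto using F1_pos, F2_pos, F3_neg, W1_neg.
Qed.

End RadialComparison.

Theorem mainTheorem13 (q : R) (u : R -> R -> R) :
  0 < q ->
  Ck 4 u ->
  (forall x y : R, 0 < u x y) ->
  (forall x y : R, Lap (Lap u) x y + Rpower (u x y) (- q) = 0) ->
  forall r : R, 0 < r ->
    0 < Derive (sph_avg u) r /\
    0 < Derive_n (sph_avg u) 2 r /\
    Derive_n (sph_avg u) 3 r < 0 /\
    Derive (sph_avg (Lap u)) r < 0.
Proof.
  intros _ Hu Hpos Heq.
  assert (Cu : C2 u) by (apply Ck2_C2, (Ck_le 4); [lia | exact Hu]).
  assert (HLu : Ck 2 (Lap u)) by exact (Ck_Lap 2 u Hu).
  assert (CLu := Ck2_C2 _ HLu).
  apply (radial_derivative_signs _ _ _ _ _ _ _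
           (sph_avg_derive u Cu) (mean_radial1_derive u Cu)
           (sph_avg_derive _ CLu) (mean_radial1_derive _ CLu)
           (radial_laplacian u Cu) (radial_laplacian _ CLu)).
  - (* Lap (Lap u) = - u^(-q) < 0 *)
    intros s; apply sph_avg_neg; [exact (Ck_continuous 0 _ (Ck_Lap 0 _ HLu)) |].
    intros x y; specialize (Heq x y).
    assert (0 < Rpower (u x y) (- q)) by apply exp_pos; lra.
  - intros s; apply sph_avg_pos; [apply Cu | exact Hpos].
  - apply mean_radial1_origin.
Qed.
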